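(* Let $X \in \mathbb{R}^{d\times n}$, $V_0, V_T \in \mathbb{R}^{m\times k}$, $W_0, W_T \in \mathbb{R}^{k\times d}$, and suppose $Y = V_T W_T X$ and $V_0 W_0 X \neq Y$. Define $\mathbf{z}(\alpha) = (V_0 + \alpha D_1)(W_0 + \alpha D_2)X$ for $\alpha\in[0,1]$, where $D_1 = V_T - V_0$ and $D_2 = W_T - W_0$, and let $\mathcal{L}(\alpha) = \frac{1}{2n}\Vert \mathbf{z}(\alpha) - Y\Vert_F^2$. If $\langle \mathbf{z}'(0), \mathbf{z}'(1)\rangle_F > 0$, where $\mathbf{z}'(0) = (D_1 W_0 + V_0 D_2)X$ and $\mathbf{z}'(1) = (D_1 W_T + V_T D_2)X$, then $\mathbf{z}'(\alpha)\neq 0$ for all $\alpha\in[0,1]$, the Gauss length of $\mathbf{z}$ is less than $\pi/2$, and $\alpha\mapsto\mathcal{L}(\alpha)$ is monotonically decreasing (non-increasing) on $[0,1]$.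
   Context: $\langle A, B\rangle_F = \operatorname{tr}(A^\top B)$ is the Frobenius inner product, and matrices in $\mathbb{R}^{m\times n}$ are identified with vectors in $\mathbb{R}^{mn}$. For a smooth curve $\mathbf{z}$ with nonvanishing derivative, let $\hat{\mathbf{v}}(\alpha) = \partial_\alpha \mathbf{z}(\alpha)/\Vert \partial_\alpha \mathbf{z}(\alpha)\Vert$; the Gauss length of $\mathbf{z}$ is $\int_0^1 \Vert \partial_\alpha \hat{\mathbf{v}}(\alpha)\Vert\, d\alpha$. Note $\mathbf{z}'(\alpha) = (D_1W_0 + V_0D_2 + 2\alpha D_1D_2)X$ is affine in $\alpha$. *)

From HB Require Import structures.
From mathcomp Require Import all_boot all_order all_algebra.
From mathcomp Require Import all_classical all_reals all_analysis.
Set Implicit Arguments. Unset Strict Implicit. Unset Printing Implicit Defensive.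
Import Order.TTheory GRing.Theory Num.Theory.
Import numFieldNormedType.Exports.
Local Open Scope ring_scope.
Local Open Scope classical_set_scope.

Section Defs.
Variable R : realType.

Definition frobI (p q : nat) (A B : 'M[R]_(p, q)) : R := \tr (A^T *m B).
Definition frobN (p q : nat) (A : 'M[R]_(p, q)) : R := Num.sqrt (frobI A A).

Definition zcurve (d n m k : nat) (X : 'M[R]_(d, n)) (V0 VT : 'M[R]_(m, k))
  (W0 WT : 'M[R]_(k, d)) (a : R) : 'M[R]_(m, n) :=
  (V0 + a *: (VT - V0)) *m (W0 + a *: (WT - W0)) *m X.

Definition lossL (d n m k : nat) (X : 'M[R]_(d, n)) (Y : 'M[R]_(m, n))
  (V0 VT : 'M[R]_(m, k)) (W0 WT : 'M[R]_(k, d)) (a : R) : R :=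
  ((2 * n)%:R)^-1 * frobN (zcurve X V0 VT W0 WT a - Y) ^+ 2.

Definition unit_tangent (p q : nat) (z : R -> 'M[R]_(p, q)) (a : R) : 'M[R]_(p, q) :=
  (frobN (derive1 z a))^-1 *: derive1 z a.

Definition gauss_length (p q : nat) (z : R -> 'M[R]_(p, q)) : \bar R :=
  \int[lebesgue_measure]_(a in `[(0:R), 1]) (frobN (derive1 (unit_tangent z) a))%:E.

End Defs.

From HB Require Import structures.
From mathcomp Require Import all_boot all_order all_algebra.
From mathcomp Require Import all_classical all_reals all_analysis.
From mathcomp Require Import ring lra.
Import Order.TTheory GRing.Theory Num.Theory.
Import numFieldNormedType.Exports.
Local Open Scope ring_scope.
Local Open Scope classical_set_scope.

(* Along the path z(t) = (V0 + t D1)(W0 + t D2) X, write u = z'(0) and v = z'(1).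
   Since z is quadratic in t, its velocity is the affine interpolation
   z'(t) = (1 - t) u + t v, and everything is governed by the Gram data
   pp = <u,u>, rr = <u,v>, qq = <v,v>:
   - ||z'(t)||^2 = (1-t)^2 pp + 2 t (1-t) rr + t^2 qq is a convex combination of
     positive numbers when rr > 0 (which forces u, v <> 0), so z' never vanishes;
   - for any curve with affine velocity, the unit tangent moves with speed
     sqrt (pp qq - rr^2) / ||z'(t)||^2, which has the explicit primitive
     atan (t sqrt (pp qq - rr^2) / ((1-t) pp + t rr)); by the fundamental theorem
     of calculus the Gauss length is atan (sqrt (pp qq - rr^2) / rr) < pi/2;
   - as z(1) = Y, the residual z(t) - Y is - (a(t) u + b(t) v) with a, b >= 0
     decreasing on [0,1], and the loss is a quadratic form in (a, b) with
     nonnegative coefficients, hence nonincreasing. *)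

Section GramAlgebra.
Variables (R : realType) (pp rr qq : R).

(* For Gram data pp = <u,u>, rr = <u,v>, qq = <v,v>, the quadratic form
   gram_form a b is the squared norm of a u + b v. *)
Definition gram_form (a b : R) : R := a ^+ 2 * pp + 2 * a * b * rr + b ^+ 2 * qq.

(* Squared norm of the affine interpolation (1 - t) u + t v, its derivative in t,
   the inner product <u, (1 - t) u + t v>, and the Gram determinant. *)
Definition gram_quad (t : R) : R := gram_form (1 - t) t.
Definition gram_quad_deriv (t : R) : R :=
  2 * ((t - 1) * pp + (1 - 2 * t) * rr + t * qq).
Definition gram_lin (t : R) : R := (1 - t) * pp + t * rr.
Definition gram_det : R := pp * qq - rr ^+ 2.

Lemma gram_formN a b : gram_form (- a) (- b) = gram_form a b.
Proof. by rewrite /gram_form; ring. Qed.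

Lemma gram_formMr a b c : gram_form (a * c) (b * c) = c ^+ 2 * gram_form a b.
Proof. by rewrite /gram_form; ring. Qed.

Lemma gram_form_le a b a' b' : 0 <= pp -> 0 <= rr -> 0 <= qq ->
  0 <= a' <= a -> 0 <= b' <= b -> gram_form a' b' <= gram_form a b.
Proof.
move=> pp0 rr0 qq0 /andP[a'0 a'a] /andP[b'0 b'b].
have le_sq x y : 0 <= x <= y -> x ^+ 2 <= y ^+ 2.
  by case/andP=> x0 xy; rewrite ler_pXn2r // ?nnegrE // (le_trans x0).
have le_mul : 2 * a' * b' <= 2 * a * b.
  by rewrite -!mulrA ler_wpM2l // ler_pM.
by rewrite /gram_form lerD ?lerD ?ler_wpM2r ?le_sq ?a'0 ?b'0.
Qed.

Lemma convex_comb_gt0 (t x y : R) : 0 <= t <= 1 -> 0 < x -> 0 < y ->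
  0 < (1 - t) * x + t * y.
Proof. by move=> /andP[t0 t1] x0 y0; nra. Qed.

(* When all three Gram entries are positive, (1 - t) u + t v never vanishes on [0,1]:
   its squared norm is a convex combination of convex combinations of them. *)
Lemma gram_quad_gt0 t : 0 < pp -> 0 < rr -> 0 < qq -> 0 <= t <= 1 ->
  0 < gram_quad t.
Proof.
move=> pp0 rr0 qq0 t01.
have -> : gram_quad t =
    (1 - t) * ((1 - t) * pp + t * rr) + t * ((1 - t) * rr + t * qq).
  by rewrite /gram_quad /gram_form; ring.
by rewrite !convex_comb_gt0.
Qed.

Lemma gram_lin_gt0 t : 0 < pp -> 0 < rr -> 0 <= t <= 1 -> 0 < gram_lin t.
Proof. by move=> pp0 rr0 t01; rewrite convex_comb_gt0. Qed.

(* Lagrange-type identity behind the arctangent primitive of the curvature. *)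
Lemma gram_lin_sqr t : gram_lin t ^+ 2 + t ^+ 2 * gram_det = pp * gram_quad t.
Proof. by rewrite /gram_lin /gram_det /gram_quad /gram_form; ring. Qed.

(* The derivative of the unit tangent ((1 - t) u + t v) / ||(1 - t) u + t v|| has
   coefficients A / S and B / S on u and v; its squared norm is the Gram
   determinant divided by the square of the squared speed. *)
Lemma unit_tangent_coeff_form t : gram_quad t != 0 ->
  gram_form (-1 - (1 - t) * gram_quad_deriv t / (2 * gram_quad t))
            (1 - t * gram_quad_deriv t / (2 * gram_quad t))
  = gram_det / gram_quad t.
Proof.
rewrite /gram_det /gram_quad_deriv /gram_quad /gram_form => Q0.
by field.
Qed.
End GramAlgebra.
Arguments gram_form {R}. Arguments gram_quad {R}. Arguments gram_quad_deriv {R}.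
Arguments gram_lin {R}. Arguments gram_det {R}.

Section FrobeniusInnerProduct.
Variables (R : realType) (p q : nat).
Implicit Types (A B C u v : 'M[R]_(p, q)) (a b : R).

Lemma frobIDl A B C : frobI (A + B) C = frobI A C + frobI B C.
Proof. by rewrite /frobI linearD /= mulmxDl mxtraceD. Qed.

Lemma frobIZl a A B : frobI (a *: A) B = a * frobI A B.
Proof. by rewrite /frobI linearZ /= -scalemxAl mxtraceZ. Qed.

Lemma frobIC A B : frobI A B = frobI B A.
Proof. by rewrite /frobI -mxtrace_tr trmx_mul trmxK. Qed.

Lemma frobIDr A B C : frobI A (B + C) = frobI A B + frobI A C.
Proof. by rewrite frobIC frobIDl !(frobIC A). Qed.

Lemma frobIZr a A B : frobI A (a *: B) = a * frobI A B.
Proof. by rewrite frobIC frobIZl frobIC. Qed.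

Lemma frobI0l A : frobI 0 A = 0.
Proof. by rewrite -(scale0r 0) frobIZl mul0r. Qed.

Lemma frobI_sqr_sum A : frobI A A = \sum_i \sum_j A j i ^+ 2.
Proof.
rewrite /frobI /mxtrace; apply: eq_bigr => i _; rewrite mxE.
by apply: eq_bigr => j _; rewrite mxE expr2.
Qed.

Lemma frobI_ge0 A : 0 <= frobI A A.
Proof.
rewrite frobI_sqr_sum; apply: sumr_ge0 => i _.
by apply: sumr_ge0 => j _; apply: sqr_ge0.
Qed.

Lemma frobI_eq0 A : frobI A A = 0 -> A = 0.
Proof.
rewrite frobI_sqr_sum => sum0.
have sq_ge0 i j : 0 <= A j i ^+ 2 by exact: sqr_ge0.
have col0 := psumr_eq0P (fun i _ => sumr_ge0 _ (fun j _ => sq_ge0 i j)) sum0.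
apply/matrixP => j i; rewrite mxE; apply/eqP; rewrite -sqrf_eq0.
by rewrite (psumr_eq0P (fun j _ => sq_ge0 i j) (col0 i isT)).
Qed.

Lemma frobI_gt0 {A} : A != 0 -> 0 < frobI A A.
Proof.
move=> A0; rewrite lt_neqAle frobI_ge0 andbT eq_sym.
by apply: contra A0 => /eqP/frobI_eq0->.
Qed.

Lemma frobI_lincomb a b u v :
  frobI (a *: u + b *: v) (a *: u + b *: v)
  = gram_form (frobI u u) (frobI u v) (frobI v v) a b.
Proof.
by rewrite /gram_form !frobIDl !frobIDr !frobIZl !frobIZr (frobIC v u); ring.
Qed.

(* Cauchy-Schwarz: the Gram determinant is nonnegative, since
   pp * (pp qq - rr^2) = ||rr u - pp v||^2. *)
Lemma frobI_gram_det_ge0 u v : 0 <= gram_det (frobI u u) (frobI u v) (frobI v v).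
Proof.
have [->|u0] := eqVneq u 0.
  by rewrite /gram_det !frobI0l mul0r expr0n subrr.
rewrite -(pmulr_rge0 _ (frobI_gt0 u0)).
have := frobI_ge0 (frobI u v *: u + (- frobI u u) *: v).
by rewrite frobI_lincomb /gram_form /gram_det; congr (_ <= _); ring.
Qed.
End FrobeniusInnerProduct.

Lemma derive1_lincomb {R : realType} {p q : nat} {g h : R -> R} {g' h' a : R}
  {c u v : 'M[R]_(p, q)} :
  is_derive a 1 g g' -> is_derive a 1 h h' ->
  derive1 (fun t => c + g t *: u + h t *: v) a = g' *: u + h' *: v.
Proof.
move=> dg dh.
have d_entry i j : is_derive a 1 (fun t => (c + g t *: u + h t *: v) i j)
    (u i j * g' + v i j * h').
  have -> : (fun t => (c + g t *: u + h t *: v) i j) =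
      (fun t => (fun _ => c i j) t + (u i j *: g) t + (v i j *: h) t).
    by apply/funext => t; rewrite !mxE /= (mulrC (g t)) (mulrC (h t)).
  by apply: is_derive_eq; rewrite add0r mul1r.
have der : derivable (fun t => c + g t *: u + h t *: v) a 1.
  by apply/derivable_mxP => i j; case: (d_entry i j).
rewrite derive1E derive_mx //; apply/matrixP => i j.
by rewrite !mxE derive_val mulrC [v i j * _]mulrC.
Qed.

Lemma integral_of_derivative (R : realType) (f F : R -> R) (a b : R) : a < b ->
  {within `[a, b], continuous f} ->
  {in `[a, b]%R, forall x : R, is_derive x 1 F (f x)} ->
  (\int[lebesgue_measure]_(x in `[a, b]) (f x)%:E = (F b - F a)%:E)%E.
Proof.
move=> ab fc dF.
have Fc : {within `[a, b], continuous F}.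
  by apply: derivable_within_continuous => x /dF [].
have [_ Fa Fb] := (continuous_within_itvP F ab).1 Fc.
rewrite EFinB; apply: continuous_FTC2 => //.
  by split => // x /subset_itv_oo_cc /dF [].
by move=> x /subset_itv_oo_cc /dF dFx; rewrite derive1E derive_val.
Qed.

Section GramCalculus.
Variables (R : realType) (pp rr qq : R).
Local Notation Q := (gram_quad pp rr qq).
Local Notation dQ := (gram_quad_deriv pp rr qq).
Local Notation L := (gram_lin pp rr).
Local Notation sD := (Num.sqrt (gram_det pp rr qq)).

Lemma is_derive_gram_quad (t : R) : is_derive t 1 Q (dQ t).
Proof.
by apply: is_derive_eq; rewrite /gram_quad /gram_form /gram_quad_deriv /GRing.scale /=; ring.
Qed.

Lemma is_derive_normalize {f : R -> R} {f' t : R} : 0 < Q t -> is_derive t 1 f f' ->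
  is_derive t 1 (fun s => f s / Num.sqrt (Q s))
    ((f' - f t * dQ t / (2 * Q t)) / Num.sqrt (Q t)).
Proof.
move=> Qt df.
have dS : is_derive t 1 (fun s => Num.sqrt (Q s)) (dQ t / (2 * Num.sqrt (Q t))).
  by rewrite mulrC; exact: is_derive1_comp (is_derive1_sqrt Qt) (is_derive_gram_quad t).
have S0 : Num.sqrt (Q t) != 0 by rewrite gt_eqF // sqrtr_gt0.
have QS : Q t = Num.sqrt (Q t) ^+ 2 by rewrite sqr_sqrtr // ltW.
apply: is_derive_eq; rewrite /GRing.scale /=.
by move: (Num.sqrt (Q t)) S0 QS => S S0 ->; field; rewrite S0.
Qed.

Definition gauss_primitive (t : R) : R := atan (t * sD / L t).

Lemma is_derive_gauss_primitive (t : R) : 0 < pp -> 0 <= gram_det pp rr qq ->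
  0 < L t -> 0 < Q t -> is_derive t 1 gauss_primitive (sD / Q t).
Proof.
move=> pp0 det0 Lt Qt.
have L0 : L t != 0 by rewrite gt_eqF.
have dg : is_derive t 1 (fun s => s * sD / L s) (sD * pp / L t ^+ 2).
  apply: is_derive_eq; move: L0; rewrite /gram_lin /GRing.scale /= => L0.
  by field.
apply: is_derive_eq (is_derive1_comp (is_derive1_atan _) dg) _.
have den : 1 + (t * sD / L t) ^+ 2 = pp * Q t / L t ^+ 2.
  rewrite -gram_lin_sqr expr_div_n exprMn sqr_sqrtr //.
  by field.
by rewrite den; field; rewrite L0 !gt_eqF.
Qed.
End GramCalculus.
Arguments gauss_primitive {R}.
Arguments is_derive_normalize {R pp rr qq f f' t}.
Arguments is_derive_gram_quad {R}.

Lemma in_set_itv_cc (R : realType) (a b x : R) : (x \in `[a, b]) = (a <= x <= b).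
Proof. by rewrite mem_setE in_itv. Qed.

Section AffineVelocity.
Variables (R : realType) (p q : nat) (z : R -> 'M[R]_(p, q)) (u v : 'M[R]_(p, q)).

Hypothesis z_velocity : derive1 z = fun t => (1 - t) *: u + t *: v.
Hypothesis uv_gt0 : 0 < frobI u v.

Local Notation pp := (frobI u u).
Local Notation rr := (frobI u v).
Local Notation qq := (frobI v v).
Local Notation Q := (gram_quad pp rr qq).
Local Notation sD := (Num.sqrt (gram_det pp rr qq)).

Let pp_gt0 : 0 < pp.
Proof. by apply: frobI_gt0; apply: contraTneq uv_gt0 => ->; rewrite frobI0l ltxx. Qed.

Let qq_gt0 : 0 < qq.
Proof.
by apply: frobI_gt0; apply: contraTneq uv_gt0 => ->; rewrite frobIC frobI0l ltxx.
Qed.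

Let Q_gt0 (t : R) : 0 <= t <= 1 -> 0 < Q t.
Proof. exact: gram_quad_gt0. Qed.

Lemma velocity_sqnorm t : frobI (derive1 z t) (derive1 z t) = Q t.
Proof. by rewrite z_velocity frobI_lincomb. Qed.

Lemma velocity_neq0 t : 0 <= t <= 1 -> derive1 z t != 0.
Proof.
move=> t01; apply/eqP => z0; have := Q_gt0 _ t01.
by rewrite -velocity_sqnorm z0 frobI0l ltxx.
Qed.

Lemma unit_tangent_affine : unit_tangent z =
  fun t => 0 + ((1 - t) / Num.sqrt (Q t)) *: u + (t / Num.sqrt (Q t)) *: v.
Proof.
apply/funext => t; rewrite /unit_tangent /frobN velocity_sqnorm z_velocity.
by rewrite add0r scalerDr !scalerA ![_^-1 * _]mulrC.
Qed.

Lemma unit_tangent_speed t : 0 <= t <= 1 ->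
  frobN (derive1 (unit_tangent z) t) = sD / Q t.
Proof.
move=> t01; have Qt := Q_gt0 _ t01.
have d_omt : is_derive t 1 (fun s : R => 1 - s) (-1).
  by apply: is_derive_eq; rewrite add0r mul1r.
have d_id : is_derive t 1 (fun s : R => s) 1 := is_derive_id t 1.
rewrite unit_tangent_affine.
rewrite (derive1_lincomb (is_derive_normalize Qt d_omt) (is_derive_normalize Qt d_id)).
rewrite /frobN frobI_lincomb gram_formMr unit_tangent_coeff_form ?gt_eqF //.
rewrite exprVn sqr_sqrtr ?(ltW Qt) // mulrC -mulrA -expr2 sqrtrM ?frobI_gram_det_ge0 //.
by rewrite sqrtr_sqr ger0_norm // invr_ge0 ltW.
Qed.

(* The Gauss length is the angle atan (sqrt (pp qq - rr^2) / rr) between u and v. *)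
Lemma gauss_length_affine : gauss_length z = (atan (sD / rr))%:E.
Proof.
have -> : gauss_length z = (\int[lebesgue_measure]_(t in `[0%R, 1%R]) (sD / Q t)%:E)%E.
  by apply: eq_integral => t; rewrite in_set_itv_cc => /unit_tangent_speed ->.
rewrite (@integral_of_derivative _ _ (gauss_primitive pp rr qq)) ?ltr01 //.
- rewrite /gauss_primitive /gram_lin !subrr mul0r !mul1r !mul0r add0r.
  by rewrite atan0 subr0.
- apply: derivable_within_continuous => t /[1!in_itv] /= t01.
  apply: derivableM => //; apply: derivableV; first by rewrite gt_eqF ?Q_gt0.
  by case: (is_derive_gram_quad pp rr qq t).
- move=> t /[1!in_itv] /= t01.
  by apply: is_derive_gauss_primitive; rewrite ?frobI_gram_det_ge0 ?gram_lin_gt0 ?Q_gt0.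
Qed.
End AffineVelocity.
Arguments velocity_neq0 {R p q z u v}.
Arguments gauss_length_affine {R p q z u v}.

Section InterpolationPath.
Variables (R : realType) (d n m k : nat) (X : 'M[R]_(d, n)).
Variables (V0 VT : 'M[R]_(m, k)) (W0 WT : 'M[R]_(k, d)).

Local Notation z := (zcurve X V0 VT W0 WT).
Local Notation u := (((VT - V0) *m W0 + V0 *m (WT - W0)) *m X).
Local Notation v := (((VT - V0) *m WT + VT *m (WT - W0)) *m X).
Local Notation P := ((VT - V0) *m (WT - W0) *m X).

Lemma zcurve_quadratic : z = fun t => V0 *m W0 *m X + t *: u + t ^+ 2 *: P.
Proof.
apply/funext => t; rewrite /zcurve; move: (VT - V0) (WT - W0) => D1 D2.
rewrite !mulmxDl !mulmxDr !mulmxDl -!scalemxAl -!scalemxAr -!scalemxAl.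
rewrite !scalerDr !scalerA -expr2 -!addrA; congr (_ + _); exact: addrCA.
Qed.

Lemma velocity_end : v = u + 2 *: P.
Proof.
set D1 := VT - V0; set D2 := WT - W0.
have -> : WT = W0 + D2 by rewrite /D2 addrC subrK.
have -> : VT = V0 + D1 by rewrite /D1 addrC subrK.
move: D1 D2 => D1 D2.
by rewrite mulmxDr mulmxDl !mulmxDl scaler_nat mulr2n addrACA.
Qed.

Lemma zcurve_velocity : derive1 z = fun t => (1 - t) *: u + t *: v.
Proof.
apply/funext => t; rewrite zcurve_quadratic velocity_end.
have d_id : is_derive t 1 (fun s : R => s) 1 := is_derive_id t 1.
have d_sq : is_derive t 1 (fun s : R => s ^+ 2) (2 * t).
  by apply: is_derive_eq; rewrite /GRing.scale /= mulr1 -mulr2n mulr_natl.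
rewrite (derive1_lincomb d_id d_sq) scalerDr !scalerA scalerBl scale1r.
by rewrite mulrC addrA subrK.
Qed.

Lemma zcurve_end : z 1 = VT *m WT *m X.
Proof. by rewrite /zcurve !scale1r ![_ + (_ - _)]addrC !subrK. Qed.

(* The residual against the endpoint is a combination of u and v whose
   coefficients are nonpositive and increase to 0 on [0, 1]. *)
Lemma zcurve_residual t : z t - z 1 =
  (- ((1 - t) ^+ 2 / 2)) *: u + (- ((1 - t) * (1 + t) / 2)) *: v.
Proof.
rewrite zcurve_quadratic velocity_end; apply/matrixP => i j; rewrite !mxE.
by field.
Qed.

Lemma loss_nonincreasing (Y : 'M[R]_(m, n)) (a b : R) :
  Y = VT *m WT *m X -> 0 <= frobI u v -> 0 <= a -> a <= b -> b <= 1 ->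
  lossL X Y V0 VT W0 WT b <= lossL X Y V0 VT W0 WT a.
Proof.
move=> -> uv_ge0 a0 ab b1.
rewrite /lossL /frobN !sqr_sqrtr ?frobI_ge0 // -zcurve_end !zcurve_residual.
rewrite !frobI_lincomb !gram_formN; apply: ler_wpM2l; first by rewrite invr_ge0.
apply: gram_form_le; rewrite ?frobI_ge0 //; apply/andP; split; nra.
Qed.
End InterpolationPath.
Arguments zcurve_velocity {R d n m k}.

Theorem mainTheorem4 (R : realType) (d n m k : nat)
  (X : 'M[R]_(d, n)) (V0 VT : 'M[R]_(m, k)) (W0 WT : 'M[R]_(k, d))
  (Y : 'M[R]_(m, n)) :
  Y = VT *m WT *m X ->
  V0 *m W0 *m X != Y ->
  0 < frobI (((VT - V0) *m W0 + V0 *m (WT - W0)) *m X)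
            (((VT - V0) *m WT + VT *m (WT - W0)) *m X) ->
  [/\ (forall a : R, a \in `[0, 1] -> derive1 (zcurve X V0 VT W0 WT) a != 0),
      (gauss_length (zcurve X V0 VT W0 WT) < (pi / 2)%:E)%E
    & (forall a b : R, a \in `[0, 1] -> b \in `[0, 1] -> a <= b ->
         lossL X Y V0 VT W0 WT b <= lossL X Y V0 VT W0 WT a)].
Proof.
move=> Y_end _ uv_gt0.
have z_velocity := zcurve_velocity X V0 VT W0 WT.
split.
- by move=> a; rewrite in_set_itv_cc => /(velocity_neq0 z_velocity uv_gt0).
- by rewrite (gauss_length_affine z_velocity uv_gt0) lte_fin atan_ltpi2.
- move=> a b; rewrite !in_set_itv_cc => /andP[a0 _] /andP[_ b1] ab.
  by apply: loss_nonincreasing => //; exact: ltW.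
Qed.
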